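(* Let $\mathcal{A}^+=\{\mathcal{A}_1,\dots,\mathcal{A}_v\}$ be a finite collection and let $F:\mathcal{A}^+\to\mathbb{R}_{\ge 0}$ satisfy $c:=\sum_{u=1}^v F(\mathcal{A}_u)>0$. Let $\mathcal{A}^*\in\arg\max_{\mathcal{A}\in\mathcal{A}^+}F(\mathcal{A})$. Let $r$ be a positive integer with $r\ge \frac{c}{F(\mathcal{A}^* )}-1$. Form $\mathcal{R}$ as the set of elements obtained by $r$ independent draws from $\mathcal{A}^+$, each with distribution $\Pr(\mathcal{A})=\frac{1}{c}F(\mathcal{A})$. Let $\mathcal{A}'\in\arg\max_{\mathcal{A}\in\mathcal{R}}F(\mathcal{A})$. Then $$F(\mathcal{A}^* )-\mathbb{E}[F(\mathcal{A}')]\le\Bigl(\frac{r}{1+r}\Bigr)^{r}F(\mathcal{A}^* ).$$ *)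

From mathcomp Require Import all_boot all_order all_algebra.
Set Implicit Arguments. Unset Strict Implicit. Unset Printing Implicit Defensive.
Import Order.TTheory GRing.Theory Num.Theory.
Local Open Scope ring_scope.

(* The collection A^+ = {A_1,...,A_v} is indexed by 'I_v; F : 'I_v -> R.
   An outcome of r independent draws is s : {ffun 'I_r -> 'I_v}
   (s j = index of the j-th drawn element). *)

Definition draw_prob (R : realFieldType) (v r : nat) (F : 'I_v -> R)
  (s : {ffun 'I_r -> 'I_v}) : R :=
  \prod_(j < r) (F (s j) / \sum_(u < v) F u).

(* E[F(A')] where A' = A_(s (sel s)) is a chosen argmax over the drawn set. *)
Definition expected_best (R : realFieldType) (v r : nat) (F : 'I_v -> R)
  (sel : {ffun 'I_r -> 'I_v} -> 'I_r) : R :=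
  \sum_(s : {ffun 'I_r -> 'I_v}) draw_prob F s * F (s (sel s)).

From mathcomp Require Import all_boot all_order all_algebra.
From mathcomp Require Import ring lra.
Import Order.TTheory GRing.Theory Num.Theory.
Local Open Scope ring_scope.

(* Write c = sum_u F u and M = F a for a maximiser a of F.  An
   outcome of r draws is a sequence s, of probability
   draw_prob F s = prod_j F (s j) / c; these probabilities sum to 1, so the
   optimality gap is  M - E[F(A')] = sum_s draw_prob F s * (M - F (s b_s)),
   where b_s is the selected best draw.  If a occurs in s, the selected draw
   is also a maximiser and the summand is <= 0; otherwise the summand is at
   most M * draw_prob F s.  Hence the gap is at most
   M * Pr(a is never drawn) = M * (1 - M/c)^r, computed by expanding a power
   of a sum as a sum over draw sequences.  Finally r >= c/M - 1 gives
   1 - M/c <= r/(1+r). *)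

Lemma sum_ffun_prod (R : comNzRingType) (J : finType) (r : nat) (w : J -> R) :
  \sum_(s : {ffun 'I_r -> J}) \prod_(j < r) w (s j) = (\sum_u w u) ^+ r.
Proof.
by rewrite -(bigA_distr_bigA (fun (j : 'I_r) u => w u)) /= prodr_const card_ord.
Qed.

Section Draws.

Context {R : realFieldType} {v r : nat} {F : 'I_v -> R}.
Hypothesis F_ge0 : forall u, 0 <= F u.

Let c := \sum_(u < v) F u.
Hypothesis c_gt0 : 0 < c.

Lemma draw_prob_ge0 (s : {ffun 'I_r -> 'I_v}) : 0 <= draw_prob F s.
Proof. by apply: prodr_ge0 => j _; rewrite divr_ge0 // ltW. Qed.

Lemma draw_prob_sum1 : \sum_(s : {ffun 'I_r -> 'I_v}) draw_prob F s = 1.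
Proof.
rewrite /draw_prob (@sum_ffun_prod _ _ _ (fun u => F u / c)) -mulr_suml.
by rewrite divff ?expr1n ?gt_eqF.
Qed.

Definition avoid_weight (a u : 'I_v) : R := if u != a then F u / c else 0.

(* Probability weight of outcome s restricted to the event "a is never drawn". *)
Definition avoid_prob (a : 'I_v) (s : {ffun 'I_r -> 'I_v}) : R :=
  \prod_(j < r) avoid_weight a (s j).

Lemma avoid_prob_ge0 (a : 'I_v) (s : {ffun 'I_r -> 'I_v}) : 0 <= avoid_prob a s.
Proof.
apply: prodr_ge0 => j _; rewrite /avoid_weight.
by case: ifP => // _; rewrite divr_ge0 // ltW.
Qed.

Lemma avoid_probE (a : 'I_v) (s : {ffun 'I_r -> 'I_v}) :
  (forall j, s j != a) -> avoid_prob a s = draw_prob F s.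
Proof. by move=> sa; apply: eq_bigr => j _; rewrite /avoid_weight sa. Qed.

Lemma avoid_prob_sum (a : 'I_v) :
  \sum_(s : {ffun 'I_r -> 'I_v}) avoid_prob a s = (1 - F a / c) ^+ r.
Proof.
rewrite (@sum_ffun_prod _ _ _ (avoid_weight a)); congr (_ ^+ _).
have restE : \sum_(u < v | u != a) F u = c - F a.
  by rewrite [c](bigD1 a) //= addrC addrK.
rewrite (bigD1 a) //= /avoid_weight eqxx add0r.
rewrite (eq_bigr (fun u => F u / c)) => [|u ->] //.
by rewrite -mulr_suml restE mulrBl divff ?gt_eqF.
Qed.

(* Pointwise bound on the loss of outcome s: if a maximiser a of F is drawn,
   the chosen element b is as good as a; otherwise the loss is at most F a. *)
Lemma loss_le_avoid {a : 'I_v} (a_max : forall u, F u <= F a)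
    {s : {ffun 'I_r -> 'I_v}} {b : 'I_r} (b_max : forall j, F (s j) <= F (s b)) :
  draw_prob F s * (F a - F (s b)) <= F a * avoid_prob a s.
Proof.
have Fa0 := F_ge0 a.
case: (boolP [exists j, s j == a]) => [/existsP [j /eqP sj] | ].
  apply: (@le_trans _ _ 0); last exact: mulr_ge0 (avoid_prob_ge0 a s).
  by rewrite mulr_ge0_le0 ?draw_prob_ge0 // subr_le0 -sj.
rewrite negb_exists => /forallP /avoid_probE ->.
by rewrite mulrC ler_wpM2r ?draw_prob_ge0 // lerBlDr lerDl.
Qed.

Lemma max_le_mass (a : 'I_v) : F a <= c.
Proof. by rewrite [c](bigD1 a) //= lerDl sumr_ge0. Qed.

Lemma max_gt0 (a : 'I_v) (a_max : forall u, F u <= F a) : 0 < F a.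
Proof.
rewrite lt_def F_ge0 andbT; apply/eqP => Fa0; move: c_gt0.
by rewrite /c big1 ?ltxx // => u _; apply/eqP; rewrite eq_le F_ge0 andbT -Fa0.
Qed.

End Draws.

Lemma miss_rate_le (R : realFieldType) (M c n : R) :
  0 < M -> M <= c -> 0 <= n -> c / M - 1 <= n -> 1 - M / c <= n / (1 + n).
Proof.
move=> M0 Mc n0 cMn.
have n1 : 0 < 1 + n by lra.
have cM : c <= M * (1 + n) by rewrite mulrC -ler_pdivrMr //; lra.
have c0 : 0 < c := lt_le_trans M0 Mc.
have -> : n / (1 + n) = 1 - 1 / (1 + n) by field; rewrite gt_eqF.
by rewrite lerD2l lerN2 ler_pdivrMr // mulrAC ler_pdivlMr // mul1r.
Qed.

Theorem theorem4 (R : realFieldType) (v : nat) (F : 'I_v -> R)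
  (hF : forall u, 0 <= F u)
  (hc : 0 < \sum_(u < v) F u)
  (astar : 'I_v) (hastar : forall u, F u <= F astar)
  (r : nat) (hr : (0 < r)%N)
  (hrc : (\sum_(u < v) F u) / F astar - 1 <= r%:R)
  (sel : {ffun 'I_r -> 'I_v} -> 'I_r)
  (hsel : forall (s : {ffun 'I_r -> 'I_v}) (j : 'I_r), F (s j) <= F (s (sel s))) :
  F astar - expected_best F sel <= (r%:R / (1 + r%:R)) ^+ r * F astar.
Proof.
have M_le_c := max_le_mass hF astar.
have M_gt0 := max_gt0 hF hc astar hastar.
set c := \sum_(u < v) F u in hc hrc M_le_c *.
set M := F astar in hastar hrc M_le_c M_gt0 *.
have gapE : M - expected_best F sel
    = \sum_(s : {ffun 'I_r -> 'I_v}) draw_prob F s * (M - F (s (sel s))).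
  rewrite /expected_best -[M in M - _]mul1r -(draw_prob_sum1 (r := r) hc).
  by rewrite mulr_suml -sumrB; apply: eq_bigr => s _; rewrite mulrBr.
rewrite gapE mulrC.
apply: (le_trans (ler_sum _ (fun s _ => loss_le_avoid hF hc hastar (hsel s)))).
rewrite -mulr_sumr avoid_prob_sum // ler_wpM2l ?(ltW M_gt0) //.
apply: lerXn2r; rewrite ?nnegrE.
- by rewrite subr_ge0 ler_pdivrMr // mul1r.
- by rewrite divr_ge0 // ltW // ltr_pwDl.
- exact: miss_rate_le M_gt0 M_le_c (ler0n _ r) hrc.
Qed.
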